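(* Let $p,q,r$ be positive integers. Then each of the following hypergraphs admits a decomposition into tight $9$-cycles: (i) $K^{(3)}_{3p,3q,3r}$ for all $p,q,r\ge 1$; (ii) $K^{(3)}(3p\,|\,3q)$ for all $p\ge 2$ and $q\ge 1$; (iii) $C^{(3)}(3p,3q)$ for all $p,q\ge 2$.
   Context: For disjoint sets $A,B,C$ of sizes $a,b,c$, $K^{(3)}_{a,b,c}$ denotes the complete $3$-partite $3$-uniform hypergraph on $A\cup B\cup C$: a triple $T$ is an edge iff $|T\cap A|=|T\cap B|=|T\cap C|=1$. For disjoint sets $A,B$ with $|A|=a$, $|B|=b$, $K^{(3)}(a\,|\,b)$ denotes the $3$-uniform hypergraph on $A\cup B$ whose edges are exactly the triples $T$ with $|T\cap A|=2$ and $|T\cap B|=1$; and $C^{(3)}(a,b)$ (crossing triplets) denotes the $3$-uniform hypergraph on $A\cup B$ whose edges are exactly the triples meeting both $A$ and $B$. A (3-uniform tight) $k$-cycle is given by a cyclic sequence $v_1,\dots,v_k$ of $k$ distinct vertices, its edges being the triples $\{v_i,v_{i+1},v_{i+2}\}$ ($i=1,\dots,k$, indices mod $k$). A decomposition is a collection of cycles whose edge sets partition the edge set. *)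

From mathcomp Require Import all_boot.
Set Implicit Arguments. Unset Strict Implicit. Unset Printing Implicit Defensive.

Section Hyper.
Variable V : finType.

Definition K3partite (A B C : {set V}) : {set {set V}} :=
  [set T : {set V} | [&& #|T| == 3, #|T :&: A| == 1, #|T :&: B| == 1
                        & #|T :&: C| == 1]].

Definition K3split (A B : {set V}) : {set {set V}} :=
  [set T : {set V} | [&& #|T| == 3, #|T :&: A| == 2 & #|T :&: B| == 1]].

Definition C3crossing (A B : {set V}) : {set {set V}} :=
  [set T : {set V} | [&& #|T| == 3, T \subset A :|: B,
                        T :&: A != set0 & T :&: B != set0]].

(* Edges of the tight cycle given by the cyclic sequence s = v_1 ... v_k:
   the triples {v_i, v_(i+1), v_(i+2)}, indices mod k. *)
Definition tight_cycle_edges (s : seq V) : seq {set V} :=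
  [seq [set x.1.1; x.1.2; x.2] | x <- zip (zip s (rot 1 s)) (rot 2 s)].

Definition tight_cycle (k : nat) (s : seq V) : bool := (size s == k) && uniq s.

(* H decomposes into tight k-cycles: a collection of tight k-cycles whose
   edge sets partition the edge set of H (each edge of H is an edge of
   exactly one cycle, exactly once, and cycles use only edges of H). *)
Definition tight_cycle_decomposable (k : nat) (H : {set {set V}}) : Prop :=
  exists cs : seq (seq V),
    all (tight_cycle k) cs /\
    perm_eq (flatten [seq tight_cycle_edges c | c <- cs]) (enum H).

End Hyper.

From mathcomp Require Import all_boot.
From mathcomp Require Import zify.
Set Implicit Arguments. Unset Strict Implicit. Unset Printing Implicit Defensive.

(* Decompositions glue along edge-disjoint unions, and the hypergraphs split
   into such unions: K_{A1 u A2, B, C} = K_{A1,B,C} u K_{A2,B,C},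
   K(A | B1 u B2) = K(A | B1) u K(A | B2),
   K(A1 u A2 | B) = K(A1 | B) u K(A2 | B) u K_{A1,A2,B} and
   C(A, B) = K(A | B) u K(B | A).  Cutting the parts into pieces of size 3
   (of size 6 or 9 for the part holding two vertices of each edge of K(A | B),
   as K(3 | 3) has only 6 vertices) reduces everything to K_{3,3,3}, K(6 | 3)
   and K(9 | 3), which are decomposed by explicit cycles checked by
   computation. *)

Section Sets.
Variable V : finType.
Implicit Types (A B C D T : {set V}).

Lemma disjoint_setUl A B C :
  [disjoint A :|: B & C] = [disjoint A & C] && [disjoint B & C].
Proof. by rewrite -!setI_eq0 setIUl setU_eq0. Qed.

Lemma disjoint_setUr A B C :
  [disjoint A & B :|: C] = [disjoint A & B] && [disjoint A & C].
Proof. by rewrite disjoint_sym disjoint_setUl !(disjoint_sym _ A). Qed.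

Lemma disjoint_set0r A : [disjoint A & (set0 : {set V})].
Proof. by rewrite -setI_eq0 setI0. Qed.

Lemma cardsI_setU T A B :
  [disjoint A & B] -> #|T :&: (A :|: B)| = #|T :&: A| + #|T :&: B|.
Proof.
move=> dAB; rewrite setIUr cardsU setIACA setIid (disjoint_setI0 dAB).
by rewrite setI0 cards0 subn0.
Qed.

Lemma leq_cardsI T A : #|T :&: A| <= #|T|.
Proof. exact/subset_leq_card/subsetIl. Qed.

Lemma subset_cardsI T A : (T \subset A) = (#|T| <= #|T :&: A|).
Proof.
apply/idP/idP => [/setIidPl-> // | le_T].
by apply/setIidPl/eqP; rewrite eqEcard subsetIl.
Qed.

Lemma leq_cardsI2 T A B :
  [disjoint A & B] -> #|T :&: A| + #|T :&: B| <= #|T|.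
Proof. by move=> dAB; rewrite -cardsI_setU ?leq_cardsI. Qed.

Lemma leq_cardsI3 T A B C :
  [disjoint A & B] -> [disjoint A & C] -> [disjoint B & C] ->
  #|T :&: A| + #|T :&: B| + #|T :&: C| <= #|T|.
Proof.
move=> dAB dAC dBC; rewrite -cardsI_setU // -cardsI_setU ?leq_cardsI //.
by rewrite disjoint_setUl dAC.
Qed.

Lemma leq_cardsI4 T A B C D :
  [disjoint A & B] -> [disjoint A & C] -> [disjoint B & C] ->
  [disjoint A & D] -> [disjoint B & D] -> [disjoint C & D] ->
  #|T :&: A| + #|T :&: B| + #|T :&: C| + #|T :&: D| <= #|T|.
Proof.
move=> dAB dAC dBC dAD dBD dCD; rewrite -cardsI_setU //.
by apply: leq_cardsI3; rewrite // disjoint_setUl ?dAC ?dAD.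
Qed.

Lemma set_split_card A k l : #|A| = k + l ->
  exists A1 A2, [/\ A = A1 :|: A2, [disjoint A1 & A2], #|A1| = k & #|A2| = l].
Proof.
move=> cA; pose A1 := [set x in take k (enum A)].
have sA1 : A1 \subset A.
  by apply/subsetP => x; rewrite inE => /mem_take; rewrite mem_enum.
have cA1 : #|A1| = k.
  rewrite cardsE (card_uniqP (take_uniq k (enum_uniq (mem A)))).
  by rewrite size_take -cardE cA; case: ltnP; lia.
exists A1, (A :\: A1); split => //.
- by rewrite -{1}(setID A A1) (setIidPr sA1).
- by rewrite -setI_eq0 setIDA setIC setDIl setDv setI0.
- by rewrite cardsDS // cA1 cA addKn.
Qed.

Lemma card_mul3_ind k (P : {set V} -> Prop) : 0 < k ->
  (forall A p, k <= p < k.*2 -> #|A| = 3 * p -> P A) ->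
  (forall A1 A2 p1 p2, [disjoint A1 & A2] -> k <= p1 -> k <= p2 ->
     #|A1| = 3 * p1 -> #|A2| = 3 * p2 -> P A1 -> P A2 -> P (A1 :|: A2)) ->
  forall A p, k <= p -> #|A| = 3 * p -> P A.
Proof.
move=> k_gt0 Pbase PsetU A p; elim/ltn_ind: p A => p IHp A le_kp cA.
have [lt_p2k | le_2kp] := ltnP p k.*2; first by apply: (Pbase A p) => //; lia.
have [A1 [A2 [-> dA12 cA1 cA2]]] := @set_split_card A (3 * k) (3 * (p - k)) ltac:(lia).
apply: (PsetU _ _ k (p - k)) => //; first by lia.
  by apply: (Pbase _ k) => //; lia.
by apply: (IHp (p - k)) => //; lia.
Qed.

Lemma decomposable_setU k (H1 H2 : {set {set V}}) : [disjoint H1 & H2] ->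
  tight_cycle_decomposable k H1 -> tight_cycle_decomposable k H2 ->
  tight_cycle_decomposable k (H1 :|: H2).
Proof.
move=> dH [cs1 [cyc1 perm1]] [cs2 [cyc2 perm2]]; exists (cs1 ++ cs2); split.
  by rewrite all_cat cyc1 cyc2.
rewrite map_cat flatten_cat; apply: perm_trans (perm_cat perm1 perm2) _.
apply: uniq_perm; rewrite ?enum_uniq //.
  rewrite cat_uniq !enum_uniq andbT /=; apply/hasPn => T; rewrite !mem_enum.
  by move=> TH2; rewrite (disjointFl dH TH2).
by move=> T; rewrite mem_cat !mem_enum in_setU.
Qed.

End Sets.

Section Splitting.
Variable V : finType.
Implicit Types (A B C : {set V}).

Lemma K3partiteC12 A B C : K3partite A B C = K3partite B A C.
Proof. by apply/setP => T; rewrite !inE; lia. Qed.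

Lemma K3partiteC13 A B C : K3partite A B C = K3partite C B A.
Proof. by apply/setP => T; rewrite !inE; lia. Qed.

Lemma K3partite_setUl A1 A2 B C :
  [disjoint A1 & A2] -> [disjoint A1 & B] -> [disjoint A1 & C] ->
  [disjoint A2 & B] -> [disjoint A2 & C] -> [disjoint B & C] ->
  K3partite (A1 :|: A2) B C = K3partite A1 B C :|: K3partite A2 B C /\
  [disjoint K3partite A1 B C & K3partite A2 B C].
Proof.
move=> d12 d1B d1C d2B d2C dBC; split.
  apply/setP => T; rewrite !inE cardsI_setU //.
  by have := leq_cardsI4 T d12 d1B d2B d1C d2C dBC; lia.
rewrite -setI_eq0; apply/eqP/setP => T; rewrite !inE.
by have := leq_cardsI4 T d12 d1B d2B d1C d2C dBC; lia.
Qed.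

Lemma K3split_setUr A B1 B2 :
  [disjoint A & B1] -> [disjoint A & B2] -> [disjoint B1 & B2] ->
  K3split A (B1 :|: B2) = K3split A B1 :|: K3split A B2 /\
  [disjoint K3split A B1 & K3split A B2].
Proof.
move=> dA1 dA2 d12; split.
  apply/setP => T; rewrite !inE cardsI_setU //.
  by have := leq_cardsI3 T dA1 dA2 d12; lia.
rewrite -setI_eq0; apply/eqP/setP => T; rewrite !inE.
by have := leq_cardsI3 T dA1 dA2 d12; lia.
Qed.

Lemma K3split_setUl A1 A2 B :
  [disjoint A1 & A2] -> [disjoint A1 & B] -> [disjoint A2 & B] ->
  K3split (A1 :|: A2) B = K3split A1 B :|: K3split A2 B :|: K3partite A1 A2 B /\
  [disjoint K3split A1 B & K3split A2 B] /\
  [disjoint K3split A1 B :|: K3split A2 B & K3partite A1 A2 B].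
Proof.
move=> d12 d1B d2B; split; [|split].
- apply/setP => T; rewrite !inE cardsI_setU //.
  by have := leq_cardsI3 T d12 d1B d2B; lia.
- rewrite -setI_eq0; apply/eqP/setP => T; rewrite !inE.
  by have := leq_cardsI3 T d12 d1B d2B; lia.
- rewrite -setI_eq0; apply/eqP/setP => T; rewrite !inE.
  by have := leq_cardsI3 T d12 d1B d2B; lia.
Qed.

Lemma C3crossing_K3split A B : [disjoint A & B] ->
  C3crossing A B = K3split A B :|: K3split B A /\
  [disjoint K3split A B & K3split B A].
Proof.
move=> dAB; split.
  apply/setP => T; rewrite !inE subset_cardsI cardsI_setU // -!card_gt0.
  by have := leq_cardsI2 T dAB; lia.
rewrite -setI_eq0; apply/eqP/setP => T; rewrite !inE.
by have := leq_cardsI2 T dAB; lia.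
Qed.

End Splitting.

Definition profile_edges (V : finType) (X : nat -> {set V}) (m : seq nat)
    : {set {set V}} :=
  [set T : {set V} | [&& #|T| == 3, #|T :&: X 0| == nth 0 m 0,
               #|T :&: X 1| == nth 0 m 1 & #|T :&: X 2| == nth 0 m 2]].

Definition cycle_triples (c : seq nat) : seq (seq nat) :=
  [seq [:: x.1.1; x.1.2; x.2] | x <- zip (zip c (rot 1 c)) (rot 2 c)].

Definition count_label (lab : seq nat) (k : nat) (t : seq nat) :=
  count (fun i => nth 3 lab i == k) t.

Definition profile_triple (lab m : seq nat) (t : seq nat) :=
  [&& size t == 3, uniq t, all (fun i => i < size lab) t &
      all (fun k => count_label lab k t == nth 0 m k) (iota 0 3)].

(* Vertices are the indices 0 .. n-1, index i lying in part [nth 3 lab i]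
   (3 meaning no part).  The check works on sequences of indices
   because finite sets do not reduce under [vm_compute]. *)
Definition certificate (lab m : seq nat) (cs : seq (seq nat)) : bool :=
  let n := size lab in
  let L := flatten (map cycle_triples cs) in
  [&& all (fun c => [&& size c == 9, uniq c & all (fun i => i < n) c]) cs,
      uniq (map (sort leq) L),
      all (profile_triple lab m) L &
      all (fun a => all (fun b => all (fun c =>
         profile_triple lab m [:: a; b; c] ==>
           (sort leq [:: a; b; c] \in map (sort leq) L))
         (iota 0 n)) (iota 0 n)) (iota 0 n)].

Lemma zip_map2 (T1 T2 T3 T4 : Type) (f : T1 -> T3) (g : T2 -> T4) s t :
  zip (map f s) (map g t) = map (fun p => (f p.1, g p.2)) (zip s t).
Proof. by elim: s t => [|x s IHs] [|y t] //=; rewrite IHs. Qed.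

Lemma uniq_map_refine (T1 T2 T3 : eqType) (E : T1 -> T2) (f : T1 -> T3) s :
  uniq (map f s) -> {in s &, forall t t', E t = E t' -> f t = f t'} ->
  uniq (map E s).
Proof.
elim: s => [|t s IHs] //= /andP[fts ufs] Ef; apply/andP; split; last first.
  by apply: IHs => // x y xs ys; apply: Ef; rewrite inE ?xs ?ys orbT.
apply: contra fts => /mapP[t' t's Ett']; apply/mapP; exists t' => //.
by apply: Ef; rewrite ?inE ?eqxx ?t's ?orbT.
Qed.

Lemma tight_cycle_edges_map (V : finType) (g : nat -> V) c :
  tight_cycle_edges (map g c) = [seq [set x in map g t] | t <- cycle_triples c].
Proof.
rewrite /tight_cycle_edges /cycle_triples -!map_rot !zip_map2 -!map_comp.
by apply: eq_map => -[[a b] d]; apply/setP => x; rewrite !inE /= orbA.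
Qed.

Lemma sort_leqP (s t : seq nat) : reflect (sort leq s = sort leq t) (perm_eq s t).
Proof. apply: perm_sortP; [exact: leq_total | exact: leq_trans | exact: anti_leq]. Qed.

Section Certificate.
Variables (V : finType) (x0 : V) (s : seq V) (lab m : seq nat).
Variable X : nat -> {set V}.
Hypotheses (s_uniq : uniq s) (size_lab : size lab = size s).
Hypothesis mem_X :
  forall i k, i < size s -> k < 3 -> (nth x0 s i \in X k) = (nth 3 lab i == k).
Hypothesis X_cover : {subset X 0 :|: X 1 :|: X 2 <= s}.
Hypotheses (dX01 : [disjoint X 0 & X 1]) (dX02 : [disjoint X 0 & X 2])
           (dX12 : [disjoint X 1 & X 2]).
Hypothesis m_sum : nth 0 m 0 + nth 0 m 1 + nth 0 m 2 = 3.

Local Notation g := (nth x0 s).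
Local Notation vset t := [set x in map g t].
Local Notation in_range t := (all (fun i => i < size lab) t).

Lemma nth_inj_in i j : i < size s -> j < size s -> g i = g j -> i = j.
Proof. by move=> ni nj /eqP; rewrite nth_uniq // => /eqP. Qed.

Lemma count_nth_X t k : in_range t -> k < 3 ->
  count (mem (X k)) (map g t) = count_label lab k t.
Proof.
move=> /allP t_rng k3; rewrite count_map; apply: eq_in_count => i it /=.
by rewrite mem_X // -size_lab t_rng.
Qed.

Lemma uniq_map_nth t : in_range t -> uniq t -> uniq (map g t).
Proof.
move=> /allP t_rng ut; rewrite map_inj_in_uniq // => i j it jt.
by apply: nth_inj_in; rewrite -size_lab ?t_rng.
Qed.

Lemma cards_vset t : uniq (map g t) -> #|vset t| = size t.
Proof. by move=> ut; rewrite cardsE (card_uniqP ut) size_map. Qed.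

Lemma cardsI_vset t Y : uniq (map g t) -> #|vset t :&: Y| = count (mem Y) (map g t).
Proof.
move=> ut; rewrite -size_filter -(card_uniqP (filter_uniq _ ut)) -cardsE.
by apply: eq_card => x; rewrite !inE mem_filter andbC.
Qed.

Lemma vset_sort t : vset (sort leq t) = vset t.
Proof. by apply/setP => x; rewrite !inE; apply/perm_mem/perm_map; rewrite perm_sort. Qed.

Lemma vset_inj t t' : profile_triple lab m t -> profile_triple lab m t' ->
  vset t = vset t' -> sort leq t = sort leq t'.
Proof.
move=> /and4P[_ ut rt _] /and4P[_ ut' rt' _] e; apply/sort_leqP.
apply: uniq_perm => // i; have [ni | ni] := ltnP i (size s).
  have mem_vset u : in_range u -> (g i \in vset u) = (i \in u).
    move=> /allP ru; rewrite inE; apply/mapP/idP => [[j ju /nth_inj_in-> //]|iu].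
      by rewrite -size_lab ru.
    by exists i.
  by rewrite -mem_vset // -[in RHS]mem_vset // e.
have notin u : in_range u -> (i \in u) = false.
  by move=> /allP ru; apply/negP => /ru; rewrite size_lab; lia.
by rewrite !notin.
Qed.

Lemma vset_profile t : profile_triple lab m t -> vset t \in profile_edges X m.
Proof.
move=> /and4P[/eqP st ut rt /allP cnt_t]; have umt := uniq_map_nth rt ut.
rewrite inE cards_vset // st eqxx /= !cardsI_vset // !count_nth_X //.
by rewrite !(eqP (cnt_t _ _)) ?eqxx // mem_iota.
Qed.

Lemma profile_vset T : T \in profile_edges X m ->
  exists2 t, profile_triple lab m t & vset t = T.
Proof.
rewrite inE => /and4P[/eqP cT /eqP c0 /eqP c1 /eqP c2].
have Ts : {subset T <= s}.
  apply/subsetP/subset_trans/subsetP/X_cover; rewrite subset_cardsI.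
  by rewrite !cardsI_setU ?disjoint_setUl ?dX02 //; lia.
pose t := map (index^~ s) (enum T).
have gt : map g t = enum T.
  by rewrite -map_comp map_id_in // => x; rewrite mem_enum /= => /Ts /nth_index->.
have rt : in_range t.
  by apply/allP => _ /mapP[x xT ->]; rewrite size_lab index_mem Ts // -mem_enum.
have ut : uniq t by apply: (@map_uniq _ _ g); rewrite gt enum_uniq.
exists t; last by rewrite gt set_enum.
apply/and4P; split => //; first by rewrite size_map -cardE cT.
apply/allP => k; rewrite mem_iota /= => k3.
rewrite -count_nth_X // -cardsI_vset ?gt ?enum_uniq // set_enum.
by case: k k3 => [|[|[|]]] //= _; apply/eqP.
Qed.

Lemma certificate_complete cs t : certificate lab m cs ->
  profile_triple lab m t ->
  sort leq t \in map (sort leq) (flatten (map cycle_triples cs)).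
Proof.
case/and4P=> _ _ _ /allP complete tP; have /and4P[/eqP st _ rt _] := tP.
case: t st rt tP => [|a [|b [|c []]]] //= _ /and4P[ra rb rc _] tP.
move: (complete a); rewrite mem_iota => /(_ ra) /allP /(_ b).
rewrite mem_iota => /(_ rb) /allP /(_ c); rewrite mem_iota => /(_ rc).
by rewrite tP.
Qed.

Lemma certificate_decomposable cs : certificate lab m cs ->
  tight_cycle_decomposable 9 (profile_edges X m).
Proof.
move=> cert; have /and4P[cyc uL okL _] := cert.
set L := flatten (map cycle_triples cs) in uL okL *.
exists (map (map g) cs); split.
  rewrite all_map; apply/allP => c cs_c; have /and3P[/eqP sc uc rc] := allP cyc c cs_c.
  by rewrite /= /tight_cycle size_map sc eqxx uniq_map_nth.
have -> : flatten [seq tight_cycle_edges c | c <- map (map g) cs] =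
          map (fun t => vset t) L.
  by rewrite map_flatten -!map_comp; congr flatten; apply: eq_map => c /=;
    rewrite tight_cycle_edges_map.
apply: uniq_perm; rewrite ?enum_uniq //.
  apply: (uniq_map_refine uL) => t t' tL t'L; apply: vset_inj; exact: (allP okL).
move=> T; rewrite mem_enum; apply/mapP/idP => [[t tL ->]|/profile_vset[t0 t0P <-]].
  exact/vset_profile/(allP okL).
have /mapP[t tL st] := certificate_complete cert t0P.
by exists t => //; rewrite -[LHS]vset_sort st vset_sort.
Qed.

End Certificate.

Definition part_labels (k0 k1 k2 : nat) := nseq k0 0 ++ nseq k1 1 ++ nseq k2 2.

Lemma certificate_profile_decomposable (V : finType) (X : nat -> {set V})
    k0 k1 k2 m cs :
  0 < k0 -> #|X 0| = k0 -> #|X 1| = k1 -> #|X 2| = k2 ->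
  [disjoint X 0 & X 1] -> [disjoint X 0 & X 2] -> [disjoint X 1 & X 2] ->
  nth 0 m 0 + nth 0 m 1 + nth 0 m 2 = 3 ->
  certificate (part_labels k0 k1 k2) m cs ->
  tight_cycle_decomposable 9 (profile_edges X m).
Proof.
move=> k0_gt0 cX0 cX1 cX2 d01 d02 d12 m_sum cert.
have [x0 _] : exists x, x \in X 0 by apply/set0Pn; rewrite -card_gt0 cX0.
have mem_part y j k : y \in X j -> j < 3 -> k < 3 -> (y \in X k) = (j == k).
  case: j => [|[|[|]]] // yj _; case: k => [|[|[|]]] //= _; rewrite ?yj //.
  - exact: disjointFr d01 yj.
  - exact: disjointFr d02 yj.
  - exact: disjointFl d01 yj.
  - exact: disjointFr d12 yj.
  - exact: disjointFl d02 yj.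
  - exact: disjointFl d12 yj.
pose s := enum (X 0) ++ enum (X 1) ++ enum (X 2).
have size_s : size s = k0 + k1 + k2 by rewrite !size_cat -!cardE cX0 cX1 cX2 addnA.
apply: (@certificate_decomposable V x0 s _ m X _ _ _ _ d01 d02 d12 m_sum cs cert).
- rewrite !cat_uniq !enum_uniq /= andbT; apply/andP; split.
    apply/hasPn => y; rewrite mem_cat !mem_enum.
    by case/orP=> yX; rewrite (mem_part _ _ _ yX).
  by apply/hasPn => y; rewrite !mem_enum => yX; rewrite (mem_part _ _ _ yX).
- by rewrite size_s !size_cat !size_nseq addnA.
- move=> i k; rewrite size_s => lt_i k3.
  rewrite /s /part_labels !nth_cat !size_nseq -!cardE cX0 cX1 !nth_nseq.
  case: ltnP => i0.
    by apply: (mem_part _ 0) => //; rewrite -mem_enum mem_nth // -cardE cX0.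
  case: ltnP => i1.
    by apply: (mem_part _ 1) => //; rewrite -mem_enum mem_nth // -cardE cX1; lia.
  have -> : i - k0 - k1 < k2 by lia.
  by apply: (mem_part _ 2) => //; rewrite -mem_enum mem_nth // -cardE cX2; lia.
- by move=> x; rewrite !mem_cat !mem_enum !inE orbA.
Qed.

Definition cycles333 := [::
  [:: 0; 4; 7; 2; 5; 8; 1; 3; 6]; [:: 0; 5; 6; 2; 3; 7; 1; 4; 8];
  [:: 0; 3; 8; 2; 4; 6; 1; 5; 7]].

Definition cycles63 := [::
  [:: 0; 1; 6; 3; 5; 7; 2; 4; 8]; [:: 0; 2; 8; 3; 4; 6; 5; 1; 7];
  [:: 0; 5; 8; 1; 4; 6; 2; 3; 7]; [:: 0; 3; 8; 5; 4; 7; 1; 2; 6];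
  [:: 0; 4; 7; 3; 1; 8; 2; 5; 6]].

Definition cycles93 := [::
  [:: 0; 1; 9; 4; 5; 11; 2; 3; 10]; [:: 3; 4; 10; 7; 8; 9; 5; 6; 11];
  [:: 6; 7; 11; 1; 2; 10; 8; 0; 9]; [:: 0; 2; 9; 3; 6; 10; 4; 1; 11];
  [:: 3; 5; 10; 6; 0; 11; 7; 4; 9]; [:: 6; 8; 11; 0; 3; 9; 1; 7; 10];
  [:: 0; 5; 11; 3; 1; 10; 8; 4; 9]; [:: 3; 8; 9; 6; 4; 11; 2; 7; 10];
  [:: 6; 2; 10; 0; 7; 9; 5; 1; 11]; [:: 0; 4; 11; 8; 1; 9; 2; 5; 10];
  [:: 3; 7; 9; 2; 4; 10; 5; 8; 11]; [:: 6; 1; 10; 5; 7; 11; 8; 2; 9]].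

Lemma certificate333 : certificate (part_labels 3 3 3) [:: 1; 1; 1] cycles333.
Proof. by vm_compute. Qed.

Lemma certificate63 : certificate (part_labels 6 3 0) [:: 2; 1; 0] cycles63.
Proof. by vm_compute. Qed.

Lemma certificate93 : certificate (part_labels 9 3 0) [:: 2; 1; 0] cycles93.
Proof. by vm_compute. Qed.

Section SmallCases.
Variable V : finType.
Implicit Types (A B C : {set V}).

Lemma K3partite_profile A B C :
  K3partite A B C = profile_edges (nth set0 [:: A; B; C]) [:: 1; 1; 1].
Proof. by apply/setP => T; rewrite !inE. Qed.

Lemma K3split_profile A B :
  K3split A B = profile_edges (nth set0 [:: A; B; set0]) [:: 2; 1; 0].
Proof. by apply/setP => T; rewrite !inE /= setI0 cards0 andbT. Qed.

Lemma decomposable_K3partite333 A B C :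
  [disjoint A & B] -> [disjoint A & C] -> [disjoint B & C] ->
  #|A| = 3 -> #|B| = 3 -> #|C| = 3 -> tight_cycle_decomposable 9 (K3partite A B C).
Proof.
move=> dAB dAC dBC cA cB cC; rewrite K3partite_profile.
exact: certificate_profile_decomposable certificate333.
Qed.

Lemma decomposable_K3split63 A B : [disjoint A & B] -> #|A| = 6 -> #|B| = 3 ->
  tight_cycle_decomposable 9 (K3split A B).
Proof.
move=> dAB cA cB; rewrite K3split_profile.
by apply: certificate_profile_decomposable certificate63;
  rewrite /= ?cards0 ?disjoint_set0r.
Qed.

Lemma decomposable_K3split93 A B : [disjoint A & B] -> #|A| = 9 -> #|B| = 3 ->
  tight_cycle_decomposable 9 (K3split A B).
Proof.
move=> dAB cA cB; rewrite K3split_profile.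
by apply: certificate_profile_decomposable certificate93;
  rewrite /= ?cards0 ?disjoint_set0r.
Qed.

End SmallCases.

Section Decompositions.
Variable V : finType.
Implicit Types (A B C : {set V}).

Lemma K3partite_card_ind B C : [disjoint B & C] ->
  (forall A, #|A| = 3 -> [disjoint A & B] -> [disjoint A & C] ->
     tight_cycle_decomposable 9 (K3partite A B C)) ->
  forall A p, 0 < p -> #|A| = 3 * p -> [disjoint A & B] -> [disjoint A & C] ->
  tight_cycle_decomposable 9 (K3partite A B C).
Proof.
move=> dBC dec3; apply: (@card_mul3_ind _ 1) => // [A p p1 cA|].
  by apply: dec3; rewrite cA; lia.
move=> A1 A2 p1 p2 d12 _ _ _ _ IH1 IH2.
rewrite !disjoint_setUl => /andP[d1B d2B] /andP[d1C d2C].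
have [-> dH] := K3partite_setUl d12 d1B d1C d2B d2C dBC.
exact: decomposable_setU dH (IH1 d1B d1C) (IH2 d2B d2C).
Qed.

Theorem decomposable_K3partite A B C p q r :
  0 < p -> 0 < q -> 0 < r ->
  [disjoint A & B] -> [disjoint A & C] -> [disjoint B & C] ->
  #|A| = 3 * p -> #|B| = 3 * q -> #|C| = 3 * r ->
  tight_cycle_decomposable 9 (K3partite A B C).
Proof.
move=> p_gt0 q_gt0 r_gt0 dAB dAC dBC cA cB cC.
apply: (K3partite_card_ind dBC _ p_gt0 cA dAB dAC) => {p p_gt0 cA dAB dAC}A cA dAB dAC.
rewrite K3partiteC12; rewrite disjoint_sym in dAB.
apply: (K3partite_card_ind dAC _ q_gt0 cB dAB dBC) => {q q_gt0 cB dAB dBC}B cB dBA dBC.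
rewrite K3partiteC13; rewrite disjoint_sym in dAC; rewrite disjoint_sym in dBC.
rewrite disjoint_sym in dBA.
apply: (K3partite_card_ind dBA _ r_gt0 cC dAC dBC) => {r r_gt0 cC dAC dBC}C cC dCA dCB.
exact: decomposable_K3partite333.
Qed.

Lemma K3split_card_indr A :
  (forall B, #|B| = 3 -> [disjoint A & B] -> tight_cycle_decomposable 9 (K3split A B)) ->
  forall B q, 0 < q -> #|B| = 3 * q -> [disjoint A & B] ->
  tight_cycle_decomposable 9 (K3split A B).
Proof.
move=> dec3; apply: (@card_mul3_ind _ 1) => // [B q q1 cB|].
  by apply: dec3; rewrite cB; lia.
move=> B1 B2 q1 q2 d12 _ _ _ _ IH1 IH2; rewrite disjoint_setUr => /andP[dA1 dA2].
have [-> dH] := K3split_setUr dA1 dA2 d12.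
exact: decomposable_setU dH (IH1 dA1) (IH2 dA2).
Qed.

Theorem decomposable_K3split A B p q :
  2 <= p -> 1 <= q -> [disjoint A & B] -> #|A| = 3 * p -> #|B| = 3 * q ->
  tight_cycle_decomposable 9 (K3split A B).
Proof.
move=> p_ge2 q_gt0 dAB cA cB.
apply: (@card_mul3_ind _ 2 (fun A => [disjoint A & B] -> _) _ _ _ A p p_ge2 cA dAB).
- by [].
- move=> {}A {p_ge2 cA dAB}p /andP[p_ge2 p_lt4] cA dAB.
  apply: (K3split_card_indr _ q_gt0 cB dAB) => {dAB}B' cB' dAB'.
  have [p2 | p3] : p = 2 \/ p = 3 by lia.
    by apply: decomposable_K3split63; rewrite // cA p2.
  by apply: decomposable_K3split93; rewrite // cA p3.
move=> A1 A2 p1 p2 d12 p1_ge2 p2_ge2 cA1 cA2 IH1 IH2.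
rewrite disjoint_setUl => /andP[d1B d2B].
have [-> [dH12 dH]] := K3split_setUl d12 d1B d2B.
apply: decomposable_setU dH (decomposable_setU dH12 (IH1 d1B) (IH2 d2B)) _.
by apply: (decomposable_K3partite (p := p1) (q := p2) (r := q)) => //; lia.
Qed.

Theorem decomposable_C3crossing A B p q :
  2 <= p -> 2 <= q -> [disjoint A & B] -> #|A| = 3 * p -> #|B| = 3 * q ->
  tight_cycle_decomposable 9 (C3crossing A B).
Proof.
move=> p_ge2 q_ge2 dAB cA cB; have [-> dH] := C3crossing_K3split dAB.
apply: decomposable_setU dH _ _.
  by apply: (decomposable_K3split (p := p) (q := q)) => //; lia.
by apply: (decomposable_K3split (p := q) (q := p)); rewrite 1?disjoint_sym //; lia.
Qed.

End Decompositions.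

Theorem lemma11 :
  (forall (V : finType) (A B C : {set V}) (p q r : nat),
      0 < p -> 0 < q -> 0 < r ->
      [disjoint A & B] -> [disjoint A & C] -> [disjoint B & C] ->
      #|A| = 3 * p -> #|B| = 3 * q -> #|C| = 3 * r ->
      tight_cycle_decomposable 9 (K3partite A B C)) /\
  (forall (V : finType) (A B : {set V}) (p q : nat),
      2 <= p -> 1 <= q -> [disjoint A & B] ->
      #|A| = 3 * p -> #|B| = 3 * q ->
      tight_cycle_decomposable 9 (K3split A B)) /\
  (forall (V : finType) (A B : {set V}) (p q : nat),
      2 <= p -> 2 <= q -> [disjoint A & B] ->
      #|A| = 3 * p -> #|B| = 3 * q ->
      tight_cycle_decomposable 9 (C3crossing A B)).
Proof.
split; [exact: decomposable_K3partite | split].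
  exact: decomposable_K3split.
exact: decomposable_C3crossing.
Qed.
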